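(* Let $\Gamma:[0,1]\to\mathcal{D}$ be a continuous path, $s\in[0,1]$, and $H\le\Gamma_s$. Then for every $t\in[0,1]$, $J_{s,t}(H)\cap\mathrm{PSL}_2\mathbb{C}$ is a subgroup of $\Gamma_t$. If moreover $H$ is finitely generated, the map $\Psi:[0,1]\to\mathcal{D}$, $\Psi(t)=J_{s,t}(H)\cap\mathrm{PSL}_2\mathbb{C}$, is continuous in the geometric topology. In particular, if $J_{s,t}|_H$ is an injective homomorphism into $\mathrm{PSL}_2\mathbb{C}$ for all $t$ in an interval $I\subseteq[0,1]$, then $t\mapsto J_{s,t}|_H$ is a continuous path $I\to S(H)$ in the topology of strong convergence.
   Context: $\mathcal{D}$: discrete torsion-free subgroups of $\mathrm{PSL}_2\mathbb{C}$ with the Chabauty (geometric) topology ($\Gamma_n\to\Gamma$ iff accumulation points of sequences $\psi_n\in\Gamma_n$ lie in $\Gamma$ and each element of $\Gamma$ is a limit of some $\psi_n\in\Gamma_n$). For a path $\Gamma$ with $\Gamma_t=\Gamma(t)$, $s\in[0,1]$, $\psi\in\Gamma_s$: a $\Gamma$-path through $\psi$ based at $s$ is a continuous $j:I\to\mathrm{PSL}_2\mathbb{C}$, $I\subseteq[0,1]$ an interval containing $s$, with $j(t)\in\Gamma_t$ for $t\in I$ and $j(s)=\psi$. Any two such paths agree on the intersection of their domains, so there is a maximal such interval $I^s_\psi$, carrying the path $j^s_\psi$. With $\overline{\mathrm{PSL}_2\mathbb{C}}=\mathrm{PSL}_2\mathbb{C}\cup\{\infty\}$, define $J_{s,t}:\Gamma_s\to\overline{\mathrm{PSL}_2\mathbb{C}}$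 by $J_{s,t}(\psi)=j^s_\psi(t)$ if $t\in I^s_\psi$ and $\infty$ otherwise. For a Kleinian group $H$, $S(H)$ is the set of injective homomorphisms $\rho:H\to\mathrm{PSL}_2\mathbb{C}$ with discrete torsion-free image, topologized so that $\rho_n\to\rho$ iff $\rho_n(\psi)\to\rho(\psi)$ for every $\psi\in H$ and $\rho_n(H)\to\rho(H)$ in $\mathcal{D}$ (strong convergence). *)

From Stdlib Require Import Reals Lra List ClassicalEpsilon.
From Coquelicot Require Import Coquelicot.
Open Scope R_scope.

Definition M2 : Type := (C * C * C * C)%type.

Definition mk (a b c d : C) : M2 := (a, b, c, d).
Definition ea (A : M2) : C := fst (fst (fst A)).
Definition eb (A : M2) : C := snd (fst (fst A)).
Definition ec (A : M2) : C := snd (fst A).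
Definition ed (A : M2) : C := snd A.

Definition mid : M2 := mk (RtoC 1) (RtoC 0) (RtoC 0) (RtoC 1).
Definition mneg (A : M2) : M2 := mk (Copp (ea A)) (Copp (eb A)) (Copp (ec A)) (Copp (ed A)).
Definition madd (A B : M2) : M2 :=
  mk (Cplus (ea A) (ea B)) (Cplus (eb A) (eb B)) (Cplus (ec A) (ec B)) (Cplus (ed A) (ed B)).
Definition mmul (A B : M2) : M2 :=
  mk (Cplus (Cmult (ea A) (ea B)) (Cmult (eb A) (ec B)))
     (Cplus (Cmult (ea A) (eb B)) (Cmult (eb A) (ed B)))
     (Cplus (Cmult (ec A) (ea B)) (Cmult (ed A) (ec B)))
     (Cplus (Cmult (ec A) (eb B)) (Cmult (ed A) (ed B))).
(* inverse of a determinant-one matrix (the adjugate) *)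
Definition minv (A : M2) : M2 := mk (ed A) (Copp (eb A)) (Copp (ec A)) (ea A).
Definition det (A : M2) : C := Cminus (Cmult (ea A) (ed A)) (Cmult (eb A) (ec A)).
Fixpoint mpow (A : M2) (n : nat) : M2 :=
  match n with O => mid | S k => mmul A (mpow A k) end.

Definition SL (A : M2) : Prop := det A = RtoC 1.

(* equality in PSL_2(C) of two SL_2 representatives *)
Definition peq (A B : M2) : Prop := A = B \/ A = mneg B.

(* entrywise l1 norm; dP is a metric on PSL_2(C) inducing its usual topology *)
Definition mnorm (A : M2) : R := Cmod (ea A) + Cmod (eb A) + Cmod (ec A) + Cmod (ed A).
Definition dP (A B : M2) : R := Rmin (mnorm (madd A (mneg B))) (mnorm (madd A B)).

Definition pconv (u : nat -> M2) (g : M2) : Prop := is_lim_seq (fun n => dP (u n) g) 0.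

(* A subset of PSL_2(C) is represented by its (sign-closed) preimage in SL_2(C). *)
Definition PSub (G : M2 -> Prop) : Prop :=
  (forall A, G A -> SL A) /\
  G mid /\
  (forall A, G A -> G (mneg A)) /\
  (forall A B, G A -> G B -> G (mmul A B)) /\
  (forall A, G A -> G (minv A)).

Definition discreteP (G : M2 -> Prop) : Prop :=
  exists eps, 0 < eps /\ forall A, G A -> dP A mid < eps -> peq A mid.

Definition torsion_freeP (G : M2 -> Prop) : Prop :=
  forall A n, G A -> peq (mpow A (S n)) mid -> peq A mid.

Definition inD (G : M2 -> Prop) : Prop := PSub G /\ discreteP G /\ torsion_freeP G.

Definition FinGen (H : M2 -> Prop) : Prop :=
  exists l : list M2, (forall x, In x l -> H x) /\
    forall K, PSub K -> (forall x, In x l -> K x) -> forall g, H g -> K g.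

Definition chab_conv (Gs : nat -> M2 -> Prop) (G : M2 -> Prop) : Prop :=
  (forall (phi : nat -> nat) (psi : nat -> M2) (g : M2),
      (forall k, (phi k < phi (S k))%nat) -> (forall k, Gs (phi k) (psi k)) ->
      SL g -> pconv psi g -> G g) /\
  (forall g, G g -> exists psi : nat -> M2, (forall n, Gs n (psi n)) /\ pconv psi g).

Definition unit01 (t : R) : Prop := 0 <= t <= 1.

(* continuous path [0,1] -> D (the Chabauty topology on D is metrizable,
   so sequential continuity is continuity) *)
Definition DPath (Gam : R -> M2 -> Prop) : Prop :=
  (forall t, unit01 t -> inD (Gam t)) /\
  (forall (tn : nat -> R) (t : R), unit01 t -> (forall n, unit01 (tn n)) ->
     is_lim_seq tn t -> chab_conv (fun n => Gam (tn n)) (Gam t)).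

Definition sub_interval (I : R -> Prop) : Prop :=
  (forall t, I t -> unit01 t) /\ (forall x y z, I x -> I z -> x <= y <= z -> I y).

Definition GPath (Gam : R -> M2 -> Prop) (s : R) (psi : M2) (I : R -> Prop) (j : R -> M2) : Prop :=
  sub_interval I /\ I s /\
  (forall t, I t -> forall eps, 0 < eps -> exists delta, 0 < delta /\
      forall u, I u -> Rabs (u - t) < delta -> dP (j u) (j t) < eps) /\
  (forall t, I t -> Gam t (j t)) /\
  peq (j s) psi.

Definition GPathVal (Gam : R -> M2 -> Prop) (s t : R) (psi g : M2) : Prop :=
  exists I j, GPath Gam s psi I j /\ I t /\ g = j t.

(* J_{s,t}(psi): the value at t of the (unique) maximal Gamma-path through psi based at s,
   None standing for infinity. *)
Definition Jst (Gam : R -> M2 -> Prop) (s t : R) (psi : M2) : option M2 :=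
  match excluded_middle_informative (exists g, GPathVal Gam s t psi g) with
  | left e => Some (proj1_sig (constructive_indefinite_description _ e))
  | right _ => None
  end.

(* J_{s,t}(H) ∩ PSL_2(C), as a sign-closed subset of SL_2(C) *)
Definition JH (Gam : R -> M2 -> Prop) (s t : R) (H : M2 -> Prop) (g : M2) : Prop :=
  exists h, H h /\ exists g', Jst Gam s t h = Some g' /\ peq g g'.

Definition JInjHom (Gam : R -> M2 -> Prop) (s t : R) (H : M2 -> Prop) : Prop :=
  (forall h, H h -> exists g, Jst Gam s t h = Some g) /\
  (forall h1 h2 g1 g2 g12, H h1 -> H h2 ->
      Jst Gam s t h1 = Some g1 -> Jst Gam s t h2 = Some g2 ->
      Jst Gam s t (mmul h1 h2) = Some g12 -> peq g12 (mmul g1 g2)) /\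
  (forall h1 h2 g1 g2, H h1 -> H h2 ->
      Jst Gam s t h1 = Some g1 -> Jst Gam s t h2 = Some g2 -> peq g1 g2 -> peq h1 h2).

From Stdlib Require Import Reals Lra Lia List Classical ClassicalEpsilon ChoiceFacts.
From Coquelicot Require Import Coquelicot.
Open Scope R_scope.

(* Near each time t the groups Gamma_u are uniformly discrete: otherwise small
   elements g_n of Gamma_(u_n), u_n -> t, would have powers accumulating, by geometric
   convergence, at a nontrivial element of Gamma_t close to the identity.  Hence every
   element of Gamma_t lies on a continuous local section u |-> l(u) in Gamma_u, two
   Gamma-paths agreeing at one time agree on their whole common interval, and every
   Gamma-path extends across each point of its domain.  Products and inverses of
   Gamma-paths are Gamma-paths, so J_{s,t}(H) is a subgroup of Gamma_t and thus lies in
   D; gluing paths with local sections gives both halves of the geometric convergence of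
   J_{s,t}(H), and the convergence of J_{s,t}(h) as t varies. *)

Lemma choice {A B : Type} (P : A -> B -> Prop) :
  (forall a, exists b, P a b) -> exists f : A -> B, forall a, P a (f a).
Proof. apply constructive_indefinite_descr_fun_choice. exact @constructive_indefinite_description. Qed.

(** * Matrix algebra *)

Definition mzero : M2 := mk 0%C 0%C 0%C 0%C.

Ltac m2_ring :=
  repeat match goal with A : M2 |- _ => destruct A as [[[? ?] ?] ?] end;
  unfold mzero, mmul, madd, mneg, minv, mid, mk, ea, eb, ec, ed; simpl;
  repeat match goal with |- (_, _) = (_, _) => f_equal end; ring.

Lemma mmulA A B C : mmul A (mmul B C) = mmul (mmul A B) C.
Proof. m2_ring. Qed.
Lemma mmul1l A : mmul mid A = A.
Proof. m2_ring. Qed.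
Lemma mmul1r A : mmul A mid = A.
Proof. m2_ring. Qed.
Lemma mmulNl A B : mmul (mneg A) B = mneg (mmul A B).
Proof. m2_ring. Qed.
Lemma mmulNr A B : mmul A (mneg B) = mneg (mmul A B).
Proof. m2_ring. Qed.
Lemma mnegK A : mneg (mneg A) = A.
Proof. m2_ring. Qed.
Lemma minvN A : minv (mneg A) = mneg (minv A).
Proof. m2_ring. Qed.
Lemma mmulVl A : SL A -> mmul (minv A) A = mid.
Proof.
  unfold SL, det; destruct A as [[[a b] c] d]; unfold mmul, minv, mid, mk, ea, eb, ec, ed; simpl.
  intro E; repeat match goal with |- (_, _) = (_, _) => f_equal end;
  try ring; rewrite <- E; unfold Cminus; ring.
Qed.
Lemma mmulVr A : SL A -> mmul A (minv A) = mid.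
Proof.
  unfold SL, det; destruct A as [[[a b] c] d]; unfold mmul, minv, mid, mk, ea, eb, ec, ed; simpl.
  intro E; repeat match goal with |- (_, _) = (_, _) => f_equal end;
  try ring; rewrite <- E; unfold Cminus; ring.
Qed.
Lemma mpowD A m n : mpow A (m + n) = mmul (mpow A m) (mpow A n).
Proof. induction m as [|m IH]; simpl; [now rewrite mmul1l | now rewrite IH, mmulA]. Qed.

(** * The metric on PSL_2(C) *)

Lemma mnorm_ge0 A : 0 <= mnorm A.
Proof.
  unfold mnorm; pose proof (Cmod_ge_0 (ea A)); pose proof (Cmod_ge_0 (eb A));
  pose proof (Cmod_ge_0 (ec A)); pose proof (Cmod_ge_0 (ed A)); lra.
Qed.
Lemma mnorm_mneg A : mnorm (mneg A) = mnorm A.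
Proof. unfold mnorm, mneg, mk, ea, eb, ec, ed; simpl; rewrite !Cmod_opp; lra. Qed.
Lemma mnorm_minv A : mnorm (minv A) = mnorm A.
Proof. unfold mnorm, minv, mk, ea, eb, ec, ed; simpl; rewrite !Cmod_opp; lra. Qed.
Lemma mnorm_mid : mnorm mid = 2.
Proof. unfold mnorm, mid, mk, ea, eb, ec, ed; simpl; rewrite Cmod_1, Cmod_0; lra. Qed.
Lemma mnorm_madd A B : mnorm (madd A B) <= mnorm A + mnorm B.
Proof.
  unfold mnorm, madd, mk, ea, eb, ec, ed; simpl.
  pose proof (Cmod_triangle (ea A) (ea B)); pose proof (Cmod_triangle (eb A) (eb B));
  pose proof (Cmod_triangle (ec A) (ec B)); pose proof (Cmod_triangle (ed A) (ed B)).
  unfold ea, eb, ec, ed in *; lra.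
Qed.
Lemma mnorm_mmul A B : mnorm (mmul A B) <= mnorm A * mnorm B.
Proof.
  assert (Hpp : forall x y z w : C,
             Cmod (x * y + z * w)%C <= Cmod x * Cmod y + Cmod z * Cmod w).
  { intros; eapply Rle_trans; [apply Cmod_triangle | rewrite !Cmod_mult; lra]. }
  destruct A as [[[a b] c] d]; destruct B as [[[a' b'] c'] d'].
  unfold mnorm, mmul, mk, ea, eb, ec, ed; simpl.
  pose proof (Hpp a a' b c'); pose proof (Hpp a b' b d');
  pose proof (Hpp c a' d c'); pose proof (Hpp c b' d d').
  pose proof (Cmod_ge_0 a); pose proof (Cmod_ge_0 b); pose proof (Cmod_ge_0 c); pose proof (Cmod_ge_0 d);
  pose proof (Cmod_ge_0 a'); pose proof (Cmod_ge_0 b'); pose proof (Cmod_ge_0 c'); pose proof (Cmod_ge_0 d').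
  nra.
Qed.
Lemma mnorm_eq0 A : mnorm A = 0 -> A = mzero.
Proof.
  destruct A as [[[a b] c] d]; unfold mnorm, mzero, mk, ea, eb, ec, ed; simpl; intro E.
  pose proof (Cmod_ge_0 a); pose proof (Cmod_ge_0 b); pose proof (Cmod_ge_0 c); pose proof (Cmod_ge_0 d).
  rewrite (Cmod_eq_0 a), (Cmod_eq_0 b), (Cmod_eq_0 c), (Cmod_eq_0 d) by lra; reflexivity.
Qed.
Lemma mnorm_sub_triangle A B C :
  mnorm (madd A (mneg C)) <= mnorm (madd A (mneg B)) + mnorm (madd B (mneg C)).
Proof.
  replace (madd A (mneg C)) with (madd (madd A (mneg B)) (madd B (mneg C))) by m2_ring.
  apply mnorm_madd.
Qed.

Lemma dP_ge0 A B : 0 <= dP A B.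
Proof. apply Rmin_glb; apply mnorm_ge0. Qed.
Lemma dP_le_mnorm_sub A B : dP A B <= mnorm (madd A (mneg B)).
Proof. apply Rmin_l. Qed.
Lemma dP_cases A B : dP A B = mnorm (madd A (mneg B)) \/ dP A B = mnorm (madd A B).
Proof. unfold dP, Rmin; destruct Rle_dec; auto. Qed.
Lemma dP_mneg_r A B : dP A (mneg B) = dP A B.
Proof. unfold dP; rewrite mnegK, Rmin_comm; reflexivity. Qed.
Lemma dP_sym A B : dP A B = dP B A.
Proof.
  unfold dP; f_equal.
  - rewrite <- mnorm_mneg; f_equal; m2_ring.
  - f_equal; m2_ring.
Qed.
Lemma dP_mneg_l A B : dP (mneg A) B = dP A B.
Proof. now rewrite dP_sym, dP_mneg_r, dP_sym. Qed.
Lemma dP_refl A : dP A A = 0.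
Proof.
  apply Rle_antisym; [| apply dP_ge0].
  eapply Rle_trans; [apply dP_le_mnorm_sub |].
  replace (madd A (mneg A)) with mzero by m2_ring.
  unfold mnorm, mzero, mk, ea, eb, ec, ed; simpl; rewrite Cmod_0; lra.
Qed.

Lemma dP_le_sub A X C : dP A C <= mnorm (madd A (mneg X)) + dP X C.
Proof.
  destruct (dP_cases X C) as [E | E]; rewrite E.
  - eapply Rle_trans; [apply dP_le_mnorm_sub | apply mnorm_sub_triangle].
  - eapply Rle_trans; [apply Rmin_r |].
    replace (madd A C) with (madd (madd A (mneg X)) (madd X C)) by m2_ring.
    apply mnorm_madd.
Qed.
Lemma dP_triangle A B C : dP A C <= dP A B + dP B C.
Proof.
  destruct (dP_cases A B) as [E | E]; rewrite E; [apply dP_le_sub |].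
  rewrite <- (dP_mneg_l B C), <- (mnegK B) at 1; apply dP_le_sub.
Qed.
Lemma mnorm_le_dP A B : mnorm A <= mnorm B + dP A B.
Proof.
  destruct (dP_cases A B) as [E | E]; rewrite E, Rplus_comm.
  - replace A with (madd (madd A (mneg B)) B) at 1 by m2_ring; apply mnorm_madd.
  - rewrite <- (mnorm_mneg B).
    replace A with (madd (madd A B) (mneg B)) at 1 by m2_ring; apply mnorm_madd.
Qed.

Lemma dP_eq0 A B : dP A B = 0 -> peq A B.
Proof.
  assert (Hsub : forall X Y, madd X (mneg Y) = mzero -> X = Y).
  { intros X Y E. replace X with (madd (madd X (mneg Y)) Y) by m2_ring.
    rewrite E; m2_ring. }
  destruct (dP_cases A B) as [E | E]; rewrite E; intro E0; apply mnorm_eq0 in E0.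
  - left; auto.
  - right; apply Hsub; now rewrite mnegK.
Qed.
Lemma dP_peq A B : peq A B -> dP A B = 0.
Proof. intros [-> | ->]; [| rewrite dP_mneg_l]; apply dP_refl. Qed.
Lemma dP_peq_l A A' B : peq A A' -> dP A B = dP A' B.
Proof. intros [-> | ->]; [reflexivity | apply dP_mneg_l]. Qed.
Lemma dP_peq_r A B B' : peq B B' -> dP A B = dP A B'.
Proof. intros [-> | ->]; [reflexivity | apply dP_mneg_r]. Qed.

Lemma peq_refl A : peq A A.
Proof. now left. Qed.
Lemma peq_sym A B : peq A B -> peq B A.
Proof. intros [-> | ->]; [now left | right; now rewrite mnegK]. Qed.
Lemma peq_trans A B C : peq A B -> peq B C -> peq A C.
Proof.
  intros HAB HBC; apply dP_eq0.
  pose proof (dP_triangle A B C); pose proof (dP_ge0 A C).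
  rewrite (dP_peq _ _ HAB), (dP_peq _ _ HBC) in *; lra.
Qed.
Lemma peq_mmul A A' B B' : peq A A' -> peq B B' -> peq (mmul A B) (mmul A' B').
Proof.
  intros [-> | ->] [-> | ->]; rewrite ?mmulNl, ?mmulNr, ?mnegK; first [now left | now right].
Qed.
Lemma peq_minv A A' : peq A A' -> peq (minv A) (minv A').
Proof. intros [-> | ->]; [now left | right; apply minvN]. Qed.

Lemma Rmin_le_mult x y a b c : 0 <= c -> x <= c * a -> y <= c * b -> Rmin x y <= c * Rmin a b.
Proof. intros; unfold Rmin; destruct (Rle_dec x y), (Rle_dec a b); nra. Qed.
Lemma dP_mmul_l C A B : dP (mmul C A) (mmul C B) <= mnorm C * dP A B.
Proof.
  apply Rmin_le_mult; [apply mnorm_ge0 | |].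
  - replace (madd (mmul C A) (mneg (mmul C B))) with (mmul C (madd A (mneg B))) by m2_ring.
    apply mnorm_mmul.
  - replace (madd (mmul C A) (mmul C B)) with (mmul C (madd A B)) by m2_ring.
    apply mnorm_mmul.
Qed.
Lemma dP_mmul_r C A B : dP (mmul A C) (mmul B C) <= mnorm C * dP A B.
Proof.
  apply Rmin_le_mult; [apply mnorm_ge0 | |]; rewrite Rmult_comm.
  - replace (madd (mmul A C) (mneg (mmul B C))) with (mmul (madd A (mneg B)) C) by m2_ring.
    apply mnorm_mmul.
  - replace (madd (mmul A C) (mmul B C)) with (mmul (madd A B) C) by m2_ring.
    apply mnorm_mmul.
Qed.
Lemma dP_mmul_le A B A' B' :
  dP (mmul A B) (mmul A' B') <= mnorm A * dP B B' + mnorm B' * dP A A'.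
Proof.
  pose proof (dP_triangle (mmul A B) (mmul A B') (mmul A' B')).
  pose proof (dP_mmul_l A B B'); pose proof (dP_mmul_r B' A A'); lra.
Qed.
Lemma dP_minv A B : dP (minv A) (minv B) = dP A B.
Proof.
  unfold dP; f_equal; rewrite <- mnorm_minv; f_equal; m2_ring.
Qed.
Lemma dP_quotient_mid A B : SL A -> dP (mmul (minv A) B) mid <= mnorm A * dP B A.
Proof.
  intro HA; pose proof (dP_mmul_l (minv A) B A) as E.
  now rewrite mmulVl, mnorm_minv in E.
Qed.
Lemma peq_of_quotient_mid A B : SL A -> peq (mmul (minv A) B) mid -> peq B A.
Proof.
  intros HA Hq.
  replace B with (mmul A (mmul (minv A) B)) by now rewrite mmulA, mmulVr, mmul1l.
  destruct Hq as [-> | ->]; [left | right]; rewrite ?mmulNr; now rewrite mmul1r.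
Qed.
Lemma mnorm_le_near_mid A e : dP A mid < e -> mnorm A <= 2 + e.
Proof. intro; pose proof (mnorm_le_dP A mid); rewrite mnorm_mid in *; lra. Qed.

Section Subgroup.
Variable G : M2 -> Prop.
Hypothesis HG : PSub G.

Lemma PSub_SL A : G A -> SL A.
Proof. apply HG. Qed.
Lemma PSub_mid : G mid.
Proof. apply HG. Qed.
Lemma PSub_mneg A : G A -> G (mneg A).
Proof. apply HG. Qed.
Lemma PSub_mmul A B : G A -> G B -> G (mmul A B).
Proof. apply HG. Qed.
Lemma PSub_minv A : G A -> G (minv A).
Proof. apply HG. Qed.
Lemma PSub_mpow A n : G A -> G (mpow A n).
Proof. intro HA; induction n; simpl; [apply PSub_mid | now apply PSub_mmul]. Qed.
Lemma PSub_peq A B : G A -> peq B A -> G B.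
Proof. intros HA [-> | ->]; [| apply PSub_mneg]; exact HA. Qed.

End Subgroup.

Lemma inD_sub G K : inD G -> PSub K -> (forall g, K g -> G g) -> inD K.
Proof.
  intros [_ [[e [He Hdisc]] Htf]] HK Hsub; split; [exact HK | split].
  - exists e; split; auto.
  - intros A n HA; apply Htf, Hsub, HA.
Qed.

(** * Bounded sequences in SL_2(C) *)

Lemma inv_succ_pos n : 0 < / INR (S n).
Proof. apply Rinv_0_lt_compat, lt_0_INR; lia. Qed.

Lemma inv_succ_le_1 n : / INR (S n) <= 1.
Proof.
  rewrite <- Rinv_1; apply Rinv_le_contravar; [lra |].
  rewrite S_INR; pose proof (pos_INR n); lra.
Qed.

Lemma inv_succ_small eps : 0 < eps -> exists N, forall n, (N <= n)%nat -> / INR (S n) < eps.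
Proof.
  intro He; destruct (archimed_cor1 eps He) as [N [HN HN0]].
  exists N; intros n Hn; eapply Rle_lt_trans; [| exact HN].
  apply Rinv_le_contravar; [apply lt_0_INR; lia | apply le_INR; lia].
Qed.

Lemma is_lim_seq_of_inv_succ (u : nat -> R) (t : R) :
  (forall n, Rabs (u n - t) < / INR (S n)) -> is_lim_seq u t.
Proof.
  intro Hu; apply is_lim_seq_spec; intro eps.
  destruct (inv_succ_small eps (cond_pos eps)) as [N HN].
  exists N; intros n Hn; specialize (Hu n); specialize (HN n Hn); lra.
Qed.

Lemma is_lim_seq_eps (u : nat -> R) (t : R) : is_lim_seq u t ->
  forall eps, 0 < eps -> exists N, forall n, (N <= n)%nat -> Rabs (u n - t) < eps.
Proof.
  intros Hu eps He; apply is_lim_seq_spec in Hu.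
  destruct (Hu (mkposreal eps He)) as [N HN]; exists N; exact HN.
Qed.

Lemma pconv_eps u g : pconv u g <->
  (forall eps, 0 < eps -> exists N, forall n, (N <= n)%nat -> dP (u n) g < eps).
Proof.
  unfold pconv; rewrite <- is_lim_seq_spec; split.
  - intros Hu eps He; destruct (Hu (mkposreal eps He)) as [N HN]; exists N; intros n Hn.
    specialize (HN n Hn); simpl in HN; rewrite Rminus_0_r, Rabs_pos_eq in HN; auto using dP_ge0.
  - intros Hu eps; destruct (Hu eps (cond_pos eps)) as [N HN]; exists N; intros n Hn.
    rewrite Rminus_0_r, Rabs_pos_eq; auto using dP_ge0.
Qed.

Definition strictly_increasing (phi : nat -> nat) : Prop := forall k, (phi k < phi (S k))%nat.

Lemma strictly_increasing_ge phi : strictly_increasing phi -> forall k, (k <= phi k)%nat.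
Proof. intros Hphi k; induction k; [lia | specialize (Hphi k); lia]. Qed.

Lemma strictly_increasing_comp phi psi :
  strictly_increasing phi -> strictly_increasing psi -> strictly_increasing (fun k => phi (psi k)).
Proof.
  intros Hphi Hpsi k.
  assert (Hmono : forall a b, (a <= b)%nat -> (phi a <= phi b)%nat).
  { intros a b Hab; induction Hab; [lia | specialize (Hphi m); lia]. }
  specialize (Hpsi k); specialize (Hmono (S (psi k)) (psi (S k)) Hpsi); specialize (Hphi (psi k)); lia.
Qed.

Lemma bounded_subseq_lim (x : nat -> R) B : (forall n, Rabs (x n) <= B) ->
  exists phi (l : R), strictly_increasing phi /\ is_lim_seq (fun k => x (phi k)) l.
Proof.
  intro HB.
  destruct (Bolzano_Weierstrass x (fun c => -B <= c <= B) (compact_P3 _ _)) as [l Hl].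
  { intro n; specialize (HB n); apply Rabs_le_between in HB; lra. }
  assert (Hnear : forall N k, exists p, (N <= p)%nat /\ Rabs (x p - l) < / INR (S k)).
  { intros N k; apply (Hl (fun y => Rabs (y - l) < / INR (S k)) N).
    exists (mkposreal _ (inv_succ_pos k)); intros y Hy; exact Hy. }
  destruct (choice (fun Nk p => (fst Nk <= p)%nat /\ Rabs (x p - l) < / INR (S (snd Nk))))
    as [f Hf]; [intros [N k]; apply Hnear |].
  set (phi := fix phi k := match k with O => f (O, O) | S k' => f (S (phi k'), S k') end).
  exists phi, l; split.
  - intro k; simpl; destruct (Hf (S (phi k), S k)); simpl in *; lia.
  - apply is_lim_seq_of_inv_succ; intros [| k]; apply (Hf (_, _)).
Qed.

Lemma subseq_lim_all (u : nat -> M2) B (fs : list (M2 -> R)) :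
  (forall f n, In f fs -> Rabs (f (u n)) <= B) ->
  exists phi, strictly_increasing phi /\
    forall f, In f fs -> exists l : R, is_lim_seq (fun k => f (u (phi k))) l.
Proof.
  induction fs as [| f fs IH]; intro HB.
  - exists (fun k => k); split; [intro; lia | intros f []].
  - destruct IH as [phi [Hphi Hlim]]; [intros; apply HB; now right |].
    destruct (bounded_subseq_lim (fun k => f (u (phi k))) B) as [psi [l [Hpsi Hl]]];
      [intro; apply HB; now left |].
    exists (fun k => phi (psi k)); split; [now apply strictly_increasing_comp |].
    intros f' [<- | Hf']; [now exists l |].
    destruct (Hlim f' Hf') as [l' Hl'].
    exists l'; apply (is_lim_seq_subseq (fun k => f' (u (phi k)))); auto.
    now apply eventually_subseq.
Qed.

Definition coords : list (M2 -> R) :=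
  (fun A => fst (ea A)) :: (fun A => snd (ea A)) :: (fun A => fst (eb A)) :: (fun A => snd (eb A)) ::
  (fun A => fst (ec A)) :: (fun A => snd (ec A)) :: (fun A => fst (ed A)) :: (fun A => snd (ed A)) :: nil.

Lemma coords_le_mnorm f A : In f coords -> Rabs (f A) <= mnorm A.
Proof.
  assert (Hre : forall z, Rabs (fst z) <= Cmod z) by apply re_le_Cmod.
  assert (Him : forall z, Rabs (snd z) <= Cmod z)
    by (intro z; eapply Rle_trans; [apply Rmax_r | apply Rmax_Cmod]).
  pose proof (Cmod_ge_0 (ea A)); pose proof (Cmod_ge_0 (eb A));
  pose proof (Cmod_ge_0 (ec A)); pose proof (Cmod_ge_0 (ed A)).
  pose proof (Hre (ea A)); pose proof (Hre (eb A)); pose proof (Hre (ec A)); pose proof (Hre (ed A));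
  pose proof (Him (ea A)); pose proof (Him (eb A)); pose proof (Him (ec A)); pose proof (Him (ed A)).
  unfold mnorm; intro Hf; repeat destruct Hf as [<- | Hf]; solve [contradiction | lra].
Qed.

Lemma Cmod_le_re_im z : Cmod z <= Rabs (fst z) + Rabs (snd z).
Proof.
  pose proof (Rabs_pos (fst z)); pose proof (Rabs_pos (snd z)).
  unfold Cmod; rewrite <- (sqrt_square (Rabs (fst z) + Rabs (snd z))) by lra.
  apply sqrt_le_1_alt; rewrite <- (pow2_abs (fst z)), <- (pow2_abs (snd z)); nra.
Qed.

Lemma is_lim_seq_sum_abs_sub (fs : list (M2 -> R)) (v : nat -> M2) g :
  (forall f, In f fs -> is_lim_seq (fun k => f (v k)) (f g)) ->
  is_lim_seq (fun k => fold_right (fun f acc => Rabs (f (v k) - f g) + acc) 0 fs) 0.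
Proof.
  induction fs as [| f fs IH]; intro Hlim; simpl; [apply is_lim_seq_const |].
  replace (Finite 0) with (Finite (Rabs (f g - f g) + 0)) by (f_equal; rewrite Rminus_diag, Rabs_R0; ring).
  apply is_lim_seq_plus'; [| apply IH; intros; apply Hlim; now right].
  apply (is_lim_seq_abs _ (f g - f g)), is_lim_seq_minus'; [apply Hlim; now left | apply is_lim_seq_const].
Qed.

Lemma pconv_of_coords v g :
  (forall f, In f coords -> is_lim_seq (fun k => f (v k)) (f g)) -> pconv v g.
Proof.
  intro Hlim; unfold pconv.
  apply (is_lim_seq_le_le (fun _ => 0) _
           (fun k => fold_right (fun f acc => Rabs (f (v k) - f g) + acc) 0 coords));
    [| apply is_lim_seq_const |].
  - intro k; split; [apply dP_ge0 |]; eapply Rle_trans; [apply dP_le_mnorm_sub |].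
    unfold mnorm; simpl.
    pose proof (Cmod_le_re_im (ea (madd (v k) (mneg g))));
    pose proof (Cmod_le_re_im (eb (madd (v k) (mneg g))));
    pose proof (Cmod_le_re_im (ec (madd (v k) (mneg g))));
    pose proof (Cmod_le_re_im (ed (madd (v k) (mneg g)))).
    simpl in *; unfold Rminus; lra.
  - now apply is_lim_seq_sum_abs_sub.
Qed.

Lemma det_sub_le A B : Cmod (Cminus (det A) (det B)) <= dP A B * (mnorm A + mnorm B).
Proof.
  assert (Hsub : forall X Y,
             Cmod (Cminus (det X) (det Y)) <= mnorm (madd X (mneg Y)) * (mnorm X + mnorm Y)).
  { intros [[[a b] c] d] [[[a' b'] c'] d'].
    unfold det, mnorm, madd, mneg, mk, ea, eb, ec, ed; simpl.
    replace (Cminus (Cminus (a * d) (b * c)) (Cminus (a' * d') (b' * c')))%C with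
      (((a + - a') * d + a' * (d + - d')) + (- ((b + - b') * c) + - (b' * (c + - c'))))%C
      by (unfold Cminus; ring).
    eapply Rle_trans; [apply Cmod_triangle |].
    pose proof (Cmod_triangle ((a + - a') * d) (a' * (d + - d')))%C.
    pose proof (Cmod_triangle (- ((b + - b') * c)) (- (b' * (c + - c'))))%C.
    rewrite !Cmod_opp, !Cmod_mult in *.
    pose proof (Cmod_ge_0 a); pose proof (Cmod_ge_0 b); pose proof (Cmod_ge_0 c); pose proof (Cmod_ge_0 d).
    pose proof (Cmod_ge_0 a'); pose proof (Cmod_ge_0 b'); pose proof (Cmod_ge_0 c'); pose proof (Cmod_ge_0 d').
    pose proof (Cmod_ge_0 (a + - a')%C); pose proof (Cmod_ge_0 (b + - b')%C).
    pose proof (Cmod_ge_0 (c + - c')%C); pose proof (Cmod_ge_0 (d + - d')%C).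
    nra. }
  destruct (dP_cases A B) as [E | E]; rewrite E; [apply Hsub |].
  replace (det B) with (det (mneg B)) by (unfold det; m2_ring).
  pose proof (Hsub A (mneg B)) as HAB; now rewrite mnegK, mnorm_mneg in HAB.
Qed.

Lemma SL_closed (v : nat -> M2) g B :
  pconv v g -> (forall k, SL (v k)) -> (forall k, mnorm (v k) <= B) -> SL g.
Proof.
  intros Hv HSL HB.
  assert (Hle : forall k, Cmod (Cminus (RtoC 1) (det g)) <= dP (v k) g * (B + mnorm g)).
  { intro k; rewrite <- (HSL k); eapply Rle_trans; [apply det_sub_le |].
    apply Rmult_le_compat_l; [apply dP_ge0 | specialize (HB k); lra]. }
  assert (H0 : Cmod (Cminus (RtoC 1) (det g)) <= 0).
  { change (Rbar_le (Cmod (Cminus (RtoC 1) (det g))) 0).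
    replace (Finite 0) with (Finite (0 * (B + mnorm g))) by (f_equal; ring).
    apply (is_lim_seq_le (fun _ => Cmod (Cminus (RtoC 1) (det g))) (fun k => dP (v k) g * (B + mnorm g)));
      [exact Hle | apply is_lim_seq_const | apply is_lim_seq_mult'; [apply Hv | apply is_lim_seq_const]]. }
  pose proof (Cmod_ge_0 (Cminus (RtoC 1) (det g))).
  assert (E : Cminus (RtoC 1) (det g) = 0%C) by (apply Cmod_eq_0; lra).
  unfold SL; replace (det g) with (Cplus (det g) (Cminus (RtoC 1) (det g))) by (rewrite E; ring).
  unfold Cminus; ring.
Qed.

Lemma SL_bounded_subseq_conv (u : nat -> M2) B :
  (forall n, mnorm (u n) <= B) -> (forall n, SL (u n)) ->
  exists phi g, strictly_increasing phi /\ SL g /\ pconv (fun k => u (phi k)) g.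
Proof.
  intros HB HSL.
  destruct (subseq_lim_all u B coords) as [phi [Hphi Hlim]].
  { intros f n Hf; eapply Rle_trans; [apply coords_le_mnorm, Hf | apply HB]. }
  destruct (choice (fun f (l : R) => In f coords -> is_lim_seq (fun k => f (u (phi k))) l)) as [L HL].
  { intro f; destruct (classic (In f coords)) as [Hf | Hf].
    - destruct (Hlim f Hf) as [l Hl]; exists l; auto.
    - exists 0; contradiction. }
  set (g := mk (L (fun A => fst (ea A)), L (fun A => snd (ea A)))
               (L (fun A => fst (eb A)), L (fun A => snd (eb A)))
               (L (fun A => fst (ec A)), L (fun A => snd (ec A)))
               (L (fun A => fst (ed A)), L (fun A => snd (ed A)))).
  assert (Hg : pconv (fun k => u (phi k)) g).
  { apply pconv_of_coords; intros f Hf; pose proof (HL f Hf) as Hf'.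
    repeat destruct Hf as [<- | Hf]; solve [contradiction | exact Hf']. }
  exists phi, g; repeat split; auto.
  apply (SL_closed _ g B Hg); intro; [apply HSL | apply HB].
Qed.

(** * Uniform discreteness along the path *)

Definition eps_discrete (G : M2 -> Prop) (eps : R) : Prop :=
  forall A, G A -> dP A mid < eps -> peq A mid.

Lemma eps_discrete_quotient G eps M A B : PSub G -> eps_discrete G eps -> 0 < M ->
  G A -> G B -> mnorm A <= M -> dP B A < eps / M -> peq (mmul (minv A) B) mid.
Proof.
  intros HG Hdisc HM HA HB HAM HBA.
  apply Hdisc; [apply (PSub_mmul G HG); [apply (PSub_minv G HG) |]; assumption |].
  eapply Rle_lt_trans; [apply dP_quotient_mid, (PSub_SL G HG), HA |].
  assert (M * (eps / M) = eps) by (field; lra).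
  pose proof (dP_ge0 B A); pose proof (mnorm_ge0 A); nra.
Qed.

Lemma nat_first_crossing (P : nat -> Prop) : ~ P O -> forall k, P k -> exists j, ~ P j /\ P (S j).
Proof.
  intros H0 k; induction k as [| k IH]; intro Hk; [contradiction |].
  destruct (classic (P k)); [now apply IH | now exists k].
Qed.

Lemma powers_escape G g e : inD G -> G g -> ~ peq g mid -> 0 < e ->
  exists k, e <= dP (mpow g k) mid.
Proof.
  intros [HG [[eG [HeG Hdisc]] Htf]] Hg Hng He.
  (* Otherwise the powers of g accumulate, and the quotient of two close powers is a
     positive power of g within eG of the identity. *)
  apply NNPP; intro Hn.
  assert (Hsmall : forall k, dP (mpow g k) mid < e)
    by (intro k; apply Rnot_le_lt; intro; apply Hn; now exists k).
  destruct (SL_bounded_subseq_conv (mpow g) (2 + e)) as [phi [l [Hphi [_ Hl]]]].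
  { intro; apply mnorm_le_near_mid, Hsmall. }
  { intro; apply (PSub_SL G HG), PSub_mpow; auto. }
  set (r := eG / (2 + e)).
  assert (Hr : 0 < r) by (apply Rdiv_lt_0_compat; lra).
  destruct (proj1 (pconv_eps _ _) Hl (r / 2)) as [N HN]; [lra |].
  pose proof (HN N (le_n _)) as HaN; pose proof (HN (S N) (le_S _ _ (le_n _))) as HbN.
  set (a := phi N) in *; set (b := phi (S N)) in *.
  assert (Hab : (a < b)%nat) by apply Hphi.
  assert (Hq : peq (mmul (minv (mpow g a)) (mpow g b)) mid).
  { apply (eps_discrete_quotient G eG (2 + e)); auto; [lra | apply PSub_mpow; auto
      | apply PSub_mpow; auto | apply mnorm_le_near_mid, Hsmall |].
    pose proof (dP_triangle (mpow g b) l (mpow g a)); rewrite (dP_sym l) in *.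
    fold r; lra. }
  replace b with (a + S (b - a - 1))%nat in Hq by lia.
  rewrite mpowD, mmulA, mmulVl, mmul1l in Hq by (apply (PSub_SL G HG), PSub_mpow; auto).
  exact (Hng (Htf g _ Hg Hq)).
Qed.

Lemma escape_annulus G g e delta : inD G -> G g -> ~ peq g mid -> 0 < e -> dP g mid < delta ->
  exists w, G w /\ e <= dP w mid < e + (2 + e) * delta.
Proof.
  intros HGD Hg Hng He Hgd.
  destruct (powers_escape G g e HGD Hg Hng He) as [k Hk].
  destruct (nat_first_crossing (fun j => e <= dP (mpow g j) mid)) with k as [j [Hj HSj]]; auto.
  { simpl; rewrite dP_refl; lra. }
  apply Rnot_le_lt in Hj.
  exists (mpow g (S j)); split; [apply PSub_mpow; auto; apply HGD | split; auto].
  simpl; pose proof (dP_mmul_r (mpow g j) g mid) as Hstep; rewrite mmul1l in Hstep.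
  pose proof (dP_triangle (mmul g (mpow g j)) (mpow g j) mid).
  pose proof (mnorm_le_near_mid _ _ Hj); pose proof (dP_ge0 g mid).
  assert (mnorm (mpow g j) * dP g mid <= (2 + e) * delta)
    by (apply Rmult_le_compat; auto using mnorm_ge0; lra).
  lra.
Qed.

Lemma annulus_sequence_absurd Gam t eT (p : nat -> R * M2) : DPath Gam -> unit01 t ->
  0 < eT -> eps_discrete (Gam t) eT ->
  (forall n, unit01 (fst (p n)) /\ Rabs (fst (p n) - t) < / INR (S n) /\
             Gam (fst (p n)) (snd (p n)) /\
             eT / 2 <= dP (snd (p n)) mid < eT / 2 + (2 + eT / 2) * / INR (S n)) ->
  False.
Proof.
  intros [HD HC] Ht HeT Hdisc Hp.
  (* A limit point of the snd (p n) lies in Gamma_t at distance eT/2 from the identity. *)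
  set (e := eT / 2) in *; assert (He : 0 < e) by (unfold e; lra).
  destruct (SL_bounded_subseq_conv (fun n => snd (p n)) (2 + (e + (2 + e))))
    as [phi [g [Hphi [HSLg Hg]]]].
  { intro n; destruct (Hp n) as (_ & _ & _ & _ & Hup).
    pose proof (inv_succ_le_1 n); pose proof (inv_succ_pos n).
    apply mnorm_le_near_mid; nra. }
  { intro n; destruct (Hp n) as (Hu & _ & Hgu & _); apply (PSub_SL (Gam (fst (p n)))); auto.
    apply HD; auto. }
  assert (Hlim : is_lim_seq (fun n => fst (p n)) t) by (apply is_lim_seq_of_inv_succ; apply Hp).
  assert (Hgt : Gam t g).
  { apply (proj1 (HC _ t Ht (fun n => proj1 (Hp n)) Hlim) phi (fun k => snd (p (phi k))) g);
      auto; intro; apply Hp. }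
  destruct (proj1 (pconv_eps _ _) Hg (e / 4)) as [N1 HN1]; [lra |].
  destruct (inv_succ_small (e / (4 * (2 + e)))) as [N2 HN2]; [apply Rdiv_lt_0_compat; lra |].
  set (k := (N1 + N2)%nat).
  specialize (HN1 k ltac:(unfold k; lia)).
  specialize (HN2 (phi k) ltac:(pose proof (strictly_increasing_ge phi Hphi k); unfold k in *; lia)).
  destruct (Hp (phi k)) as (_ & _ & _ & Hlow & Hup).
  assert ((2 + e) * / INR (S (phi k)) < e / 4).
  { replace (e / 4) with ((2 + e) * (e / (4 * (2 + e)))) by (field; lra).
    apply Rmult_lt_compat_l; lra. }
  pose proof (dP_triangle g (snd (p (phi k))) mid) as Htri.
  rewrite (dP_sym g (snd (p (phi k)))) in Htri.
  assert (Hgmid : peq g mid) by (apply Hdisc; auto; unfold e in *; lra).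
  pose proof (dP_triangle (snd (p (phi k))) g mid); rewrite (dP_peq _ _ Hgmid) in *.
  lra.
Qed.

Lemma uniformly_discrete_near Gam t : DPath Gam -> unit01 t ->
  exists d h, 0 < d /\ 0 < h /\
    forall u, unit01 u -> Rabs (u - t) < h -> eps_discrete (Gam u) d.
Proof.
  intros HD Ht.
  destruct (proj1 HD t Ht) as [_ [[eT [HeT Hdisc]] _]].
  assert (He : 0 < eT / 2) by lra.
  (* Otherwise, within 1/(n+1) of t, some Gamma_u has a nontrivial element within 1/(n+1)
     of the identity, and one of its powers lies in the annulus
     eT/2 <= dP _ mid < eT/2 + (2 + eT/2)/(n+1). *)
  apply NNPP; intro Hn.
  assert (Hesc : forall n, exists p : R * M2,
             unit01 (fst p) /\ Rabs (fst p - t) < / INR (S n) /\ Gam (fst p) (snd p) /\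
             eT / 2 <= dP (snd p) mid < eT / 2 + (2 + eT / 2) * / INR (S n)).
  { intro n; apply NNPP; intro Hno; apply Hn.
    exists (/ INR (S n)), (/ INR (S n)); split; [apply inv_succ_pos | split; [apply inv_succ_pos |]].
    intros u Hu Hut g Hg Hgd; apply NNPP; intro Hng; apply Hno.
    destruct (escape_annulus (Gam u) g (eT / 2) (/ INR (S n)) (proj1 HD u Hu) Hg Hng He Hgd)
      as [w [Hw Hwd]].
    now exists (u, w). }
  destruct (choice _ Hesc) as [p Hp].
  exact (annulus_sequence_absurd Gam t eT p HD Ht HeT Hdisc Hp).
Qed.

Lemma locally_uniformly_separated Gam x B : DPath Gam -> unit01 x -> 0 < B ->
  exists r h, 0 < r /\ 0 < h /\
    forall v a b, unit01 v -> Rabs (v - x) < h -> Gam v a -> Gam v b ->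
      mnorm a <= B -> dP a b < r -> peq a b.
Proof.
  intros HD Hx HB; destruct (uniformly_discrete_near Gam x HD Hx) as [d [h [Hd [Hh Hdisc]]]].
  exists (d / B), h; split; [apply Rdiv_lt_0_compat; auto | split; auto].
  intros v a b Hv Hvx Ha Hb HaB Hab.
  destruct (proj1 HD v Hv) as [HGv _].
  apply peq_sym, peq_of_quotient_mid; [apply (PSub_SL _ HGv _ Ha) |].
  apply (eps_discrete_quotient (Gam v) d B); auto; now rewrite dP_sym.
Qed.

(** * Gamma-paths *)

Definition convex (I : R -> Prop) : Prop := forall x y z, I x -> I z -> x <= y <= z -> I y.

Definition locally_invariant (I P : R -> Prop) : Prop :=
  forall x, I x -> exists h, 0 < h /\ forall v, I v -> Rabs (v - x) < h -> (P v <-> P x).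

Lemma locally_invariant_right I P : convex I -> locally_invariant I P ->
  forall a b, a <= b -> I a -> I b -> P a -> P b.
Proof.
  intros Hconv Hloc a b Hab Ia Ib Pa.
  set (S := fun x => a <= x <= b /\ forall v, a <= v <= x -> P v).
  assert (Sa : S a) by (split; [lra | intros v Hv; replace v with a by lra; auto]).
  destruct (completeness S) as [m [Hub Hlub]]; [exists b; intros x [Hx _]; lra | now exists a |].
  assert (Ham : a <= m) by now apply Hub.
  assert (Hmb : m <= b) by (apply Hlub; intros x [Hx _]; lra).
  assert (Im : I m) by (apply (Hconv a m b); auto).
  destruct (Hloc m Im) as [h [Hh Hl]].
  assert (Hx : exists x, S x /\ m - h < x).
  { apply NNPP; intro Hn; enough (m <= m - h) by lra.
    apply Hlub; intros x Sx; apply Rnot_lt_le; intro; apply Hn; now exists x. }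
  destruct Hx as [x [[Hxab Px] Hxm]].
  assert (Hxm' : x <= m) by (apply Hub; split; auto).
  assert (Pm : P m).
  { apply (Hl x); [apply (Hconv a x b); auto; lra | rewrite Rabs_left1 by lra; lra | apply Px; lra]. }
  set (y := Rmin (m + h / 2) b).
  assert (Sy : S y).
  { split; [unfold y; split; [apply Rmin_glb; lra | apply Rmin_r] |].
    intros v Hv; destruct (Rle_dec v x); [apply Px; lra |].
    assert (v <= m + h / 2) by (eapply Rle_trans; [apply Hv | apply Rmin_l]).
    assert (v <= b) by (eapply Rle_trans; [apply Hv | apply Rmin_r]).
    apply (Hl v); auto; [apply (Hconv a v b); auto; lra | apply Rabs_def1; lra]. }
  assert (Hym : y <= m) by now apply Hub.
  replace b with m; [exact Pm |].
  unfold y, Rmin in Hym; destruct (Rle_dec (m + h / 2) b); lra.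
Qed.

Lemma locally_invariant_const I P : convex I -> locally_invariant I P ->
  forall a b, I a -> I b -> P a -> P b.
Proof.
  intros Hconv Hloc a b Ia Ib Pa; destruct (Rle_dec a b); [eapply locally_invariant_right; eauto |].
  apply NNPP; intro Pb; apply (locally_invariant_right I (fun x => ~ P x) Hconv) with b a;
    auto; try lra.
  intros x Ix; destruct (Hloc x Ix) as [h [Hh Hl]]; exists h; split; auto.
  intros v Iv Hv; specialize (Hl v Iv Hv); tauto.
Qed.

Definition continuous_on (I : R -> Prop) (j : R -> M2) : Prop :=
  forall t, I t -> forall eps, 0 < eps -> exists delta, 0 < delta /\
    forall u, I u -> Rabs (u - t) < delta -> dP (j u) (j t) < eps.

Definition gamma_path (Gam : R -> M2 -> Prop) (I : R -> Prop) (j : R -> M2) : Prop :=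
  sub_interval I /\ continuous_on I j /\ forall t, I t -> Gam t (j t).

Lemma GPath_gamma_path Gam s psi I j :
  GPath Gam s psi I j <-> gamma_path Gam I j /\ I s /\ peq (j s) psi.
Proof. unfold GPath, gamma_path, continuous_on; tauto. Qed.

Lemma continuous_on_disagree_near I j1 j2 x : continuous_on I j1 -> continuous_on I j2 -> I x ->
  ~ peq (j1 x) (j2 x) ->
  exists h, 0 < h /\ forall v, I v -> Rabs (v - x) < h -> ~ peq (j1 v) (j2 v).
Proof.
  intros C1 C2 Ix Hx.
  assert (Hpos : 0 < dP (j1 x) (j2 x)).
  { destruct (Rle_lt_or_eq_dec _ _ (dP_ge0 (j1 x) (j2 x))) as [| E]; auto.
    exfalso; apply Hx, dP_eq0; auto. }
  set (e := dP (j1 x) (j2 x) / 2); assert (He : 0 < e) by (unfold e; lra).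
  destruct (C1 x Ix e He) as [d1 [Hd1 K1]]; destruct (C2 x Ix e He) as [d2 [Hd2 K2]].
  exists (Rmin d1 d2); split; [apply Rmin_pos; auto |]; intros v Iv Hv Pv.
  specialize (K1 v Iv (Rlt_le_trans _ _ _ Hv (Rmin_l _ _))).
  specialize (K2 v Iv (Rlt_le_trans _ _ _ Hv (Rmin_r _ _))).
  pose proof (dP_triangle (j1 x) (j1 v) (j2 x)); pose proof (dP_triangle (j1 v) (j2 v) (j2 x)).
  rewrite (dP_peq _ _ Pv), (dP_sym (j1 x) (j1 v)) in *; unfold e in *; lra.
Qed.

Lemma sub_interval_inter I1 I2 : sub_interval I1 -> sub_interval I2 ->
  sub_interval (fun v => I1 v /\ I2 v).
Proof.
  intros [S1 V1] [S2 V2]; split; [intros v [Hv _]; auto |].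
  intros x y z [] [] Hy; split; [apply (V1 x y z) | apply (V2 x y z)]; auto.
Qed.

Lemma continuous_on_mmul I j1 j2 : continuous_on I j1 -> continuous_on I j2 ->
  continuous_on I (fun u => mmul (j1 u) (j2 u)).
Proof.
  intros C1 C2 t It eps He.
  set (B1 := mnorm (j1 t) + 1); pose proof (mnorm_ge0 (j2 t)) as HB2.
  assert (0 <= mnorm (j1 t)) by apply mnorm_ge0.
  set (e := Rmin 1 (eps / (B1 + mnorm (j2 t) + 1))).
  assert (He' : 0 < e) by (apply Rmin_pos; [lra | apply Rdiv_lt_0_compat; unfold B1; lra]).
  assert (e <= 1) by apply Rmin_l.
  assert (Heps : e * (B1 + mnorm (j2 t) + 1) <= eps).
  { assert (Hle : e <= eps / (B1 + mnorm (j2 t) + 1)) by apply Rmin_r.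
    apply (Rmult_le_compat_r (B1 + mnorm (j2 t) + 1)) in Hle; [| unfold B1; lra].
    unfold Rdiv in Hle; rewrite Rmult_assoc, Rinv_l, Rmult_1_r in Hle; unfold B1 in *; lra. }
  destruct (C1 t It e He') as [d1 [Hd1 K1]]; destruct (C2 t It e He') as [d2 [Hd2 K2]].
  exists (Rmin d1 d2); split; [apply Rmin_pos; auto |]; intros v Iv Hv.
  specialize (K1 v Iv (Rlt_le_trans _ _ _ Hv (Rmin_l _ _))).
  specialize (K2 v Iv (Rlt_le_trans _ _ _ Hv (Rmin_r _ _))).
  pose proof (dP_mmul_le (j1 v) (j2 v) (j1 t) (j2 t)).
  pose proof (mnorm_le_dP (j1 v) (j1 t)); pose proof (mnorm_ge0 (j1 v)).
  pose proof (dP_ge0 (j2 v) (j2 t)); pose proof (dP_ge0 (j1 v) (j1 t)).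
  assert (mnorm (j1 v) * dP (j2 v) (j2 t) <= B1 * e) by (apply Rmult_le_compat; unfold B1; lra).
  assert (mnorm (j2 t) * dP (j1 v) (j1 t) <= mnorm (j2 t) * e) by (apply Rmult_le_compat_l; lra).
  nra.
Qed.

Lemma convex_union I1 I2 w0 : convex I1 -> convex I2 -> I1 w0 -> I2 w0 ->
  convex (fun u => I1 u \/ I2 u).
Proof.
  intros V1 V2 W1 W2 x y z [Hx | Hx] [Hz | Hz] Hy.
  - left; apply (V1 x y z); auto.
  - destruct (Rle_dec y w0); [destruct (Rle_dec x w0) |].
    + left; apply (V1 x y w0); auto; lra.
    + right; apply (V2 w0 y z); auto; lra.
    + right; apply (V2 w0 y z); auto; lra.
  - destruct (Rle_dec y w0); [destruct (Rle_dec x w0) |].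
    + right; apply (V2 x y w0); auto; lra.
    + left; apply (V1 w0 y z); auto; lra.
    + left; apply (V1 w0 y z); auto; lra.
  - right; apply (V2 x y z); auto.
Qed.

Lemma convex_near_outside I1 I2 w0 x v : convex I1 -> convex I2 -> I1 w0 -> I2 w0 ->
  I1 x -> ~ I2 x -> I2 v -> Rabs (v - x) < Rabs (w0 - x) -> I1 v.
Proof.
  intros V1 V2 W1 W2 X1 X2 Y2 Hv.
  assert (Hxw : x <> w0) by (intro; subst; contradiction).
  apply Rabs_def2 in Hv; destruct Hv as [Hv1 Hv2].
  destruct (Rlt_dec x w0).
  - rewrite Rabs_right in * by lra.
    destruct (Rle_dec v x); [exfalso; apply X2, (V2 v x w0); auto; lra |].
    apply (V1 x v w0); auto; lra.
  - rewrite Rabs_left in * by lra.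
    destruct (Rle_dec x v); [exfalso; apply X2, (V2 w0 x v); auto; lra |].
    apply (V1 w0 v x); auto; lra.
Qed.

Definition glue (I1 : R -> Prop) (j1 j2 : R -> M2) : R -> M2 :=
  fun u => if excluded_middle_informative (I1 u) then j1 u else j2 u.

Lemma glue_l I1 j1 j2 u : I1 u -> glue I1 j1 j2 u = j1 u.
Proof. intro; unfold glue; destruct excluded_middle_informative; tauto. Qed.

Lemma glue_peq_r (I1 I2 : R -> Prop) j1 j2 u :
  (forall v, I1 v -> I2 v -> peq (j1 v) (j2 v)) -> I2 u -> peq (glue I1 j1 j2 u) (j2 u).
Proof. intros Hag Hu; unfold glue; destruct excluded_middle_informative; auto using peq_refl. Qed.

Lemma locally_of_sequences (D : R -> Prop) (u0 : R) (Good : R -> Prop) :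
  (forall v : nat -> R, (forall n, D (v n)) -> is_lim_seq v u0 -> exists N, Good (v N)) ->
  exists d, 0 < d /\ forall v, D v -> Rabs (v - u0) < d -> Good v.
Proof.
  intro Hseq; apply NNPP; intro Hn.
  assert (Hbad : forall n, exists v, D v /\ Rabs (v - u0) < / INR (S n) /\ ~ Good v).
  { intro n; apply NNPP; intro Hn2; apply Hn; exists (/ INR (S n)); split; [apply inv_succ_pos |].
    intros v Dv Hv; apply NNPP; intro; apply Hn2; now exists v. }
  destruct (choice _ Hbad) as [w Hw].
  destruct (Hseq w) as [N HN]; [intro; apply Hw | apply is_lim_seq_of_inv_succ; intro; apply Hw |].
  exact (proj2 (proj2 (Hw N)) HN).
Qed.

Definition ball01 (t h u : R) : Prop := unit01 u /\ Rabs (u - t) < h.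

Lemma ball01_center t h : unit01 t -> 0 < h -> ball01 t h t.
Proof. intros; split; auto; rewrite Rminus_diag, Rabs_R0; auto. Qed.

Lemma sub_interval_ball01 t h : sub_interval (ball01 t h).
Proof.
  split; [intros u []; auto |]; intros x y z [[] Hx] [[] Hz] Hy.
  apply Rabs_def2 in Hx; apply Rabs_def2 in Hz.
  split; [split; lra | apply Rabs_def1; lra].
Qed.

Section GammaPaths.
Variable Gam : R -> M2 -> Prop.
Hypothesis HD : DPath Gam.

Lemma gamma_paths_agree_near I j1 j2 x : gamma_path Gam I j1 -> gamma_path Gam I j2 -> I x ->
  peq (j1 x) (j2 x) ->
  exists h, 0 < h /\ forall v, I v -> Rabs (v - x) < h -> peq (j1 v) (j2 v).
Proof.
  intros [[HI _] [C1 G1]] [_ [C2 G2]] Ix Hx.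
  destruct (locally_uniformly_separated Gam x (mnorm (j1 x) + 1)) as [r [h [Hr [Hh Hsep]]]];
    auto; [pose proof (mnorm_ge0 (j1 x)); lra |].
  set (e := Rmin 1 (r / 4)); assert (He : 0 < e) by (apply Rmin_pos; lra).
  assert (e <= 1) by apply Rmin_l; assert (e <= r / 4) by apply Rmin_r.
  destruct (C1 x Ix e He) as [d1 [Hd1 K1]]; destruct (C2 x Ix e He) as [d2 [Hd2 K2]].
  exists (Rmin h (Rmin d1 d2)); split; [repeat apply Rmin_pos; auto |]; intros v Iv Hv.
  assert (Rabs (v - x) < h) by (eapply Rlt_le_trans; [exact Hv | apply Rmin_l]).
  assert (Rmin d1 d2 <= d1 /\ Rmin d1 d2 <= d2) by (split; [apply Rmin_l | apply Rmin_r]).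
  assert (Rmin h (Rmin d1 d2) <= Rmin d1 d2) by apply Rmin_r.
  specialize (K1 v Iv ltac:(lra)); specialize (K2 v Iv ltac:(lra)).
  apply (Hsep v); auto.
  - pose proof (mnorm_le_dP (j1 v) (j1 x)); lra.
  - pose proof (dP_triangle (j1 v) (j1 x) (j2 v)); pose proof (dP_triangle (j1 x) (j2 x) (j2 v)).
    rewrite (dP_peq _ _ Hx), (dP_sym (j2 x)) in *; lra.
Qed.

Lemma gamma_path_restrict I K j : gamma_path Gam I j -> sub_interval K ->
  (forall v, K v -> I v) -> gamma_path Gam K j.
Proof.
  intros [_ [C G]] HK HKI; split; [exact HK | split; [| auto]].
  intros t Kt eps He; destruct (C t (HKI t Kt) eps He) as [d [Hd Hc]]; exists d; auto.
Qed.

Lemma gamma_path_unique I1 I2 j1 j2 u0 : gamma_path Gam I1 j1 -> gamma_path Gam I2 j2 ->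
  I1 u0 -> I2 u0 -> peq (j1 u0) (j2 u0) -> forall u, I1 u -> I2 u -> peq (j1 u) (j2 u).
Proof.
  intros P1 P2 H1 H2 H0 u Hu1 Hu2.
  assert (HK : sub_interval (fun v => I1 v /\ I2 v)) by (apply sub_interval_inter; apply P1 || apply P2).
  pose proof (gamma_path_restrict _ _ _ P1 HK (fun v Hv => proj1 Hv)) as Q1.
  pose proof (gamma_path_restrict _ _ _ P2 HK (fun v Hv => proj2 Hv)) as Q2.
  apply (locally_invariant_const (fun v => I1 v /\ I2 v) (fun v => peq (j1 v) (j2 v))
           (proj2 HK)) with u0; [| split; auto | split; auto | exact H0].
  intros x Kx; destruct (classic (peq (j1 x) (j2 x))) as [Px | Px].
  - destruct (gamma_paths_agree_near _ _ _ x Q1 Q2 Kx Px) as [h [Hh Hnear]].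
    exists h; split; auto; intros v Kv Hv; specialize (Hnear v Kv Hv); tauto.
  - destruct (continuous_on_disagree_near _ _ _ x (proj1 (proj2 Q1)) (proj1 (proj2 Q2)) Kx Px)
      as [h [Hh Hnear]].
    exists h; split; auto; intros v Kv Hv; specialize (Hnear v Kv Hv); tauto.
Qed.

Lemma glue_gamma_path I1 I2 j1 j2 w0 : gamma_path Gam I1 j1 -> gamma_path Gam I2 j2 ->
  I1 w0 -> I2 w0 -> (forall u, I1 u -> I2 u -> peq (j1 u) (j2 u)) ->
  gamma_path Gam (fun u => I1 u \/ I2 u) (glue I1 j1 j2).
Proof.
  intros [[S1 V1] [C1 G1]] [[S2 V2] [C2 G2]] W1 W2 Hag.
  assert (D1 : forall x v, I1 x -> I1 v -> dP (glue I1 j1 j2 v) (glue I1 j1 j2 x) = dP (j1 v) (j1 x))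
    by (intros; rewrite !glue_l; auto).
  assert (D2 : forall x v, I2 x -> I2 v -> dP (glue I1 j1 j2 v) (glue I1 j1 j2 x) = dP (j2 v) (j2 x))
    by (intros; rewrite (dP_peq_l _ _ _ (glue_peq_r I1 I2 j1 j2 v Hag H0)),
                        (dP_peq_r _ _ _ (glue_peq_r I1 I2 j1 j2 x Hag H)); reflexivity).
  split; [split; [intros t [|]; auto | apply (convex_union I1 I2 w0); auto] | split].
  - intros x Hx eps He.
    destruct (classic (I1 x)) as [X1 | X1]; destruct (classic (I2 x)) as [X2 | X2].
    + destruct (C1 x X1 eps He) as [d1 [Hd1 K1]]; destruct (C2 x X2 eps He) as [d2 [Hd2 K2]].
      exists (Rmin d1 d2); split; [apply Rmin_pos; auto |]; intros v [Y1 | Y2] Hv.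
      * rewrite D1; auto; apply K1; auto; eapply Rlt_le_trans; [exact Hv | apply Rmin_l].
      * rewrite D2; auto; apply K2; auto; eapply Rlt_le_trans; [exact Hv | apply Rmin_r].
    + destruct (C1 x X1 eps He) as [d1 [Hd1 K1]].
      exists (Rmin d1 (Rabs (w0 - x))); split.
      { apply Rmin_pos; auto; apply Rabs_pos_lt; intro; replace w0 with x in W2 by lra; auto. }
      intros v Hv Hvx; assert (Y1 : I1 v).
      { destruct Hv as [| Y2]; auto.
        apply (convex_near_outside I1 I2 w0 x v); auto.
        eapply Rlt_le_trans; [exact Hvx | apply Rmin_r]. }
      rewrite D1; auto; apply K1; auto; eapply Rlt_le_trans; [exact Hvx | apply Rmin_l].
    + destruct (C2 x X2 eps He) as [d2 [Hd2 K2]].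
      exists (Rmin d2 (Rabs (w0 - x))); split.
      { apply Rmin_pos; auto; apply Rabs_pos_lt; intro; replace w0 with x in W1 by lra; auto. }
      intros v Hv Hvx; assert (Y2 : I2 v).
      { destruct Hv as [Y1 |]; auto.
        apply (convex_near_outside I2 I1 w0 x v); auto.
        eapply Rlt_le_trans; [exact Hvx | apply Rmin_r]. }
      rewrite D2; auto; apply K2; auto; eapply Rlt_le_trans; [exact Hvx | apply Rmin_l].
    + exfalso; destruct Hx; auto.
  - intros t Ht; unfold glue; destruct excluded_middle_informative as [|Hn]; auto.
    destruct Ht; [contradiction | auto].
Qed.

Lemma local_section_continuous t h g rho l : 0 < rho ->
  (forall u, ball01 t h u -> Gam u (l u) /\ dP (l u) g < rho) ->
  (forall u a b, ball01 t h u -> Gam u a -> Gam u b -> dP a g < 2 * rho -> dP b g < 2 * rho ->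
     peq a b) ->
  continuous_on (ball01 t h) l.
Proof.
  intros Hrho Hl Huniq u0 Hu0 eps He.
  apply (locally_of_sequences (ball01 t h) u0 (fun v => dP (l v) (l u0) < eps)).
  intros v Hv Hlim.
  destruct (Hl u0 Hu0) as [G0 D0].
  destruct (proj2 (proj2 HD v u0 (proj1 Hu0) (fun n => proj1 (Hv n)) Hlim) (l u0) G0)
    as [psi [Hpsi Cpsi]].
  destruct (proj1 (pconv_eps _ _) Cpsi (Rmin eps rho)) as [N HN]; [apply Rmin_pos; auto |].
  specialize (HN N (le_n _)); exists N.
  assert (HN1 : dP (psi N) (l u0) < eps) by (eapply Rlt_le_trans; [exact HN | apply Rmin_l]).
  assert (HN2 : dP (psi N) (l u0) < rho) by (eapply Rlt_le_trans; [exact HN | apply Rmin_r]).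
  destruct (Hl (v N) (Hv N)) as [GN DN].
  assert (Hpeq : peq (psi N) (l (v N))).
  { apply (Huniq (v N)); auto; pose proof (dP_triangle (psi N) (l u0) g); lra. }
  now rewrite <- (dP_peq_l _ _ _ Hpeq).
Qed.

Lemma local_lift t g : unit01 t -> Gam t g ->
  exists h rho l, 0 < h /\ 0 < rho /\ gamma_path Gam (ball01 t h) l /\ peq (l t) g /\
    forall u a, ball01 t h u -> Gam u a -> dP a g < rho -> peq a (l u).
Proof.
  intros Ht Hg.
  destruct (locally_uniformly_separated Gam t (mnorm g + 1)) as [r [h0 [Hr [Hh0 Hsep]]]];
    auto; [pose proof (mnorm_ge0 g); lra |].
  set (rho := Rmin (1 / 2) (r / 4)); assert (Hrho : 0 < rho) by (apply Rmin_pos; lra).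
  assert (rho <= 1 / 2) by apply Rmin_l; assert (rho <= r / 4) by apply Rmin_r.
  destruct (locally_of_sequences unit01 t (fun u => exists a, Gam u a /\ dP a g < rho))
    as [h1 [Hh1 Hex]].
  { intros v Hv Hlim; destruct (proj2 (proj2 HD v t Ht Hv Hlim) g Hg) as [psi [Hpsi Cpsi]].
    destruct (proj1 (pconv_eps _ _) Cpsi rho Hrho) as [N HN].
    exists N, (psi N); split; auto. }
  set (h := Rmin h0 h1); assert (Hh : 0 < h) by (apply Rmin_pos; auto).
  assert (h <= h0) by apply Rmin_l; assert (h <= h1) by apply Rmin_r.
  (* l u is any element of Gamma_u within rho of g; separation makes it unique up to sign. *)
  set (l := fun u => epsilon (inhabits mid) (fun a => Gam u a /\ dP a g < rho)).
  assert (Hl : forall u, ball01 t h u -> Gam u (l u) /\ dP (l u) g < rho).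
  { intros u [Hu Hut]; apply epsilon_spec, Hex; auto; lra. }
  assert (Huniq : forall u a b, ball01 t h u -> Gam u a -> Gam u b ->
                    dP a g < 2 * rho -> dP b g < 2 * rho -> peq a b).
  { intros u a b [Hu Hut] Ha Hb Hag Hbg; apply (Hsep u); auto; [lra | |].
    - pose proof (mnorm_le_dP a g); lra.
    - pose proof (dP_triangle a g b); rewrite (dP_sym g b) in *; lra. }
  exists h, rho, l; split; [exact Hh | split; [exact Hrho | split; [split | split]]].
  - apply sub_interval_ball01.
  - split; [apply (local_section_continuous t h g rho); auto | intros u Hu; apply Hl, Hu].
  - destruct (Hl t (ball01_center t h Ht Hh)) as [Gt Dt].
    apply (Huniq t); auto; [apply ball01_center; auto | lra | rewrite dP_refl; lra].
  - intros u a Hu Ha Hag; destruct (Hl u Hu); apply (Huniq u); auto; lra.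
Qed.

Lemma gamma_path_mid : gamma_path Gam unit01 (fun _ => mid).
Proof.
  split; [split; [auto | intros x y z [] [] Hy; split; lra] | split].
  - intros u Hu eps He; exists 1; split; [lra | intros; rewrite dP_refl; auto].
  - intros u Hu; apply PSub_mid, (proj1 HD u Hu).
Qed.

Lemma gamma_path_mmul I1 I2 j1 j2 : gamma_path Gam I1 j1 -> gamma_path Gam I2 j2 ->
  gamma_path Gam (fun u => I1 u /\ I2 u) (fun u => mmul (j1 u) (j2 u)).
Proof.
  intros P1 P2.
  assert (HK : sub_interval (fun v => I1 v /\ I2 v)) by (apply sub_interval_inter; apply P1 || apply P2).
  destruct (gamma_path_restrict _ _ _ P1 HK (fun v Hv => proj1 Hv)) as [_ [C1 G1]].
  destruct (gamma_path_restrict _ _ _ P2 HK (fun v Hv => proj2 Hv)) as [_ [C2 G2]].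
  split; [exact HK | split; [now apply continuous_on_mmul |]].
  intros u Hu; apply PSub_mmul; auto; apply (proj1 HD u), HK, Hu.
Qed.

Lemma gamma_path_minv I j : gamma_path Gam I j -> gamma_path Gam I (fun u => minv (j u)).
Proof.
  intros [HI [C G]]; split; [exact HI | split].
  - intros u Iu eps He; destruct (C u Iu eps He) as [d [Hd K]]; exists d; split; auto.
    intros v Iv Hv; rewrite dP_minv; auto.
  - intros u Iu; apply PSub_minv; auto; apply (proj1 HD u), HI, Iu.
Qed.

(** * The maps J_{s,t} *)

Lemma Jst_GPathVal s t h g : Jst Gam s t h = Some g -> GPathVal Gam s t h g.
Proof.
  unfold Jst; destruct excluded_middle_informative as [e |]; [| discriminate].
  intro E; injection E as <-; destruct constructive_indefinite_description; auto.
Qed.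

Lemma Jst_defined s t h g : GPathVal Gam s t h g -> exists g', Jst Gam s t h = Some g'.
Proof.
  intro Hg; unfold Jst; destruct excluded_middle_informative as [e | e];
    [eexists; reflexivity | exfalso; apply e; eauto].
Qed.

Lemma GPathVal_unique s t h g1 g2 :
  GPathVal Gam s t h g1 -> GPathVal Gam s t h g2 -> peq g1 g2.
Proof.
  intros [I1 [j1 [P1 [T1 ->]]]] [I2 [j2 [P2 [T2 ->]]]].
  apply GPath_gamma_path in P1; apply GPath_gamma_path in P2.
  destruct P1 as [C1 [S1 E1]], P2 as [C2 [S2 E2]].
  apply (gamma_path_unique I1 I2 j1 j2 s); auto.
  eapply peq_trans; [exact E1 | apply peq_sym; exact E2].
Qed.

Lemma JH_of_GPath s t H h I j g : H h -> GPath Gam s h I j -> I t -> peq g (j t) ->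
  JH Gam s t H g.
Proof.
  intros Hh P It E; exists h; split; auto.
  assert (V : GPathVal Gam s t h (j t)) by (exists I, j; auto).
  destruct (Jst_defined _ _ _ _ V) as [g' Hg']; exists g'; split; auto.
  eapply peq_trans; [exact E |]; apply (GPathVal_unique s t h); auto.
  now apply Jst_GPathVal.
Qed.

Lemma JH_GPath s t H g : JH Gam s t H g ->
  exists h I j, H h /\ GPath Gam s h I j /\ I t /\ peq g (j t).
Proof.
  intros [h [Hh [g' [E P]]]]; apply Jst_GPathVal in E; destruct E as [I [j [Pj [It ->]]]].
  exists h, I, j; auto.
Qed.

Lemma GPath_glue s h I j K l u : GPath Gam s h I j -> gamma_path Gam K l ->
  I u -> K u -> peq (j u) (l u) ->
  GPath Gam s h (fun v => I v \/ K v) (glue I j l) /\ (forall v, K v -> peq (glue I j l v) (l v)).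
Proof.
  intros P Cl Iu Ku Hu; apply GPath_gamma_path in P; destruct P as [C [Is E]].
  assert (Hag : forall v, I v -> K v -> peq (j v) (l v)) by (apply (gamma_path_unique I K j l u); auto).
  split; [| intros v Kv; apply (glue_peq_r I K); auto].
  apply GPath_gamma_path; split; [apply (glue_gamma_path I K j l u); auto |].
  split; [now left | rewrite glue_l; auto].
Qed.

Lemma GPath_extend s h I j t : GPath Gam s h I j -> I t ->
  exists e J K, 0 < e /\ GPath Gam s h K J /\ (forall u, ball01 t e u -> K u) /\
    (forall u, I u -> peq (J u) (j u)).
Proof.
  intros P It.
  assert (Ut : unit01 t) by (apply GPath_gamma_path in P; apply P, It).
  destruct (local_lift t (j t)) as [e [_ [l [He [_ [Cl [El _]]]]]]];
    [auto | apply GPath_gamma_path in P; apply P, It |].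
  destruct (GPath_glue s h I j _ l t P Cl It (ball01_center t e Ut He)) as [PJ _];
    [now apply peq_sym |].
  exists e, (glue I j l), (fun u => I u \/ ball01 t e u); split; auto; split; auto; split.
  - intros; right; auto.
  - intros u Iu; rewrite glue_l; auto; apply peq_refl.
Qed.

Lemma GPath_eventually_close s h K J t e (tn : nat -> R) : GPath Gam s h K J -> 0 < e ->
  unit01 t -> (forall u, ball01 t e u -> K u) -> (forall n, unit01 (tn n)) -> is_lim_seq tn t ->
  forall eps, 0 < eps -> exists N, forall n, (N <= n)%nat -> K (tn n) /\ dP (J (tn n)) (J t) < eps.
Proof.
  intros P He Ht HK Htn Hlim eps Heps; apply GPath_gamma_path in P.
  destruct P as [[_ [CJ _]] _].
  destruct (CJ t (HK t (ball01_center t e Ht He)) eps Heps) as [d [Hd Hclose]].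
  destruct (is_lim_seq_eps tn t Hlim (Rmin e d)) as [N HN]; [apply Rmin_pos; auto |].
  exists N; intros n Hn; specialize (HN n Hn).
  assert (Kn : K (tn n)) by (apply HK; split; [apply Htn | eapply Rlt_le_trans; [exact HN | apply Rmin_l]]).
  split; [exact Kn | apply Hclose; auto; eapply Rlt_le_trans; [exact HN | apply Rmin_r]].
Qed.

Lemma JH_sub_Gam s t H g : unit01 t -> JH Gam s t H g -> Gam t g.
Proof.
  intros Ht Hg; destruct (JH_GPath _ _ _ _ Hg) as [h [I [j [_ [P [It E]]]]]].
  apply GPath_gamma_path in P.
  apply (PSub_peq (Gam t) (proj1 (proj1 HD t Ht)) (j t)); [apply P, It | exact E].
Qed.

Lemma JH_PSub s t H : unit01 s -> PSub H -> unit01 t -> PSub (JH Gam s t H).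
Proof.
  intros Hs HH Ht; split; [| split; [| split; [| split]]].
  - intros A HA; apply (PSub_SL (Gam t) (proj1 (proj1 HD t Ht))), (JH_sub_Gam s t H); auto.
  - apply (JH_of_GPath s t H mid unit01 (fun _ => mid)); auto using peq_refl.
    + exact (PSub_mid H HH).
    + apply GPath_gamma_path; auto using gamma_path_mid, peq_refl.
  - intros A HA; destruct (JH_GPath _ _ _ _ HA) as [h [I [j [Hh [P [It E]]]]]].
    apply (JH_of_GPath s t H h I j); auto.
    destruct E as [-> | ->]; [now right | left; apply mnegK].
  - intros A B HA HB.
    destruct (JH_GPath _ _ _ _ HA) as [h1 [I1 [j1 [Hh1 [P1 [It1 E1]]]]]].
    destruct (JH_GPath _ _ _ _ HB) as [h2 [I2 [j2 [Hh2 [P2 [It2 E2]]]]]].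
    apply GPath_gamma_path in P1, P2.
    destruct P1 as [C1 [Is1 F1]], P2 as [C2 [Is2 F2]].
    apply (JH_of_GPath s t H (mmul h1 h2) (fun u => I1 u /\ I2 u) (fun u => mmul (j1 u) (j2 u)));
      auto using peq_mmul.
    + exact (PSub_mmul H HH h1 h2 Hh1 Hh2).
    + apply GPath_gamma_path; auto using gamma_path_mmul, peq_mmul.
  - intros A HA; destruct (JH_GPath _ _ _ _ HA) as [h [I [j [Hh [P [It E]]]]]].
    apply GPath_gamma_path in P; destruct P as [C [Is F]].
    apply (JH_of_GPath s t H (minv h) I (fun u => minv (j u))); auto using peq_minv.
    + exact (PSub_minv H HH h Hh).
    + apply GPath_gamma_path; auto using gamma_path_minv, peq_minv.
Qed.

Lemma JH_limit_points s H (tn : nat -> R) t : unit01 t -> (forall n, unit01 (tn n)) ->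
  is_lim_seq tn t ->
  forall phi psi g, strictly_increasing phi -> (forall k, JH Gam s (tn (phi k)) H (psi k)) ->
    SL g -> pconv psi g -> JH Gam s t H g.
Proof.
  intros Ht Htn Hlim phi psi g Hphi Hpsi HSLg Hconv.
  assert (Hgt : Gam t g).
  { apply (proj1 (proj2 HD tn t Ht Htn Hlim) phi psi g Hphi); auto.
    intro k; apply (JH_sub_Gam s _ H); auto. }
  (* The local section through g captures psi k for large k, so the path carrying psi k
     glues with it and reaches g at time t. *)
  destruct (local_lift t g Ht Hgt) as [e [rho [l [He [Hrho [Cl [El Hcapt]]]]]]].
  destruct (is_lim_seq_eps tn t Hlim e He) as [N1 HN1].
  destruct (proj1 (pconv_eps _ _) Hconv rho Hrho) as [N2 HN2].
  set (k := (N1 + N2)%nat); set (u := tn (phi k)).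
  assert (Bu : ball01 t e u).
  { split; [apply Htn | apply HN1; pose proof (strictly_increasing_ge phi Hphi k); unfold k in *; lia]. }
  destruct (JH_GPath _ _ _ _ (Hpsi k)) as [hk [Ik [jk [Hhk [Pk [Iku Ek]]]]]].
  assert (Hjl : peq (jk u) (l u)).
  { apply (peq_trans _ (psi k)); [now apply peq_sym |].
    apply Hcapt; [exact Bu | apply (JH_sub_Gam s _ H); [apply Htn | apply Hpsi] |].
    apply HN2; unfold k; lia. }
  destruct (GPath_glue s hk Ik jk _ l u Pk Cl Iku Bu Hjl) as [PJ Hglue].
  apply (JH_of_GPath s t H hk _ (glue Ik jk l) g Hhk PJ); [right; apply ball01_center; auto |].
  apply (peq_trans _ (l t)); [now apply peq_sym | apply peq_sym, Hglue, ball01_center; auto].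
Qed.

Lemma JH_approximation s H (tn : nat -> R) t : unit01 s -> PSub H -> unit01 t ->
  (forall n, unit01 (tn n)) -> is_lim_seq tn t ->
  forall g, JH Gam s t H g -> exists psi, (forall n, JH Gam s (tn n) H (psi n)) /\ pconv psi g.
Proof.
  intros Hs HH Ht Htn Hlim g Hg.
  destruct (JH_GPath _ _ _ _ Hg) as [h [I [j [Hh [P [It E]]]]]].
  destruct (GPath_extend s h I j t P It) as [e [J [K [He [PJ [HK HJ]]]]]].
  assert (EJ : peq g (J t)) by (apply (peq_trans _ (j t)); auto; now apply peq_sym, HJ).
  set (psi := fun n => if excluded_middle_informative (K (tn n)) then J (tn n) else mid).
  exists psi; split.
  - intro n; unfold psi; destruct excluded_middle_informative.
    + apply (JH_of_GPath s _ H h K J); auto using peq_refl.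
    + apply PSub_mid, JH_PSub; auto.
  - apply pconv_eps; intros eps Heps.
    destruct (GPath_eventually_close s h K J t e tn PJ He Ht HK Htn Hlim eps Heps) as [N HN].
    exists N; intros n Hn; destruct (HN n Hn) as [Kn Hclose].
    unfold psi; destruct excluded_middle_informative; [| contradiction].
    now rewrite (dP_peq_r _ _ _ EJ).
Qed.

Lemma Jst_continuous s (tn : nat -> R) t h g (gn : nat -> M2) : unit01 t ->
  (forall n, unit01 (tn n)) -> is_lim_seq tn t ->
  Jst Gam s t h = Some g -> (forall n, Jst Gam s (tn n) h = Some (gn n)) -> pconv gn g.
Proof.
  intros Ht Htn Hlim Jg Jgn.
  apply Jst_GPathVal in Jg; destruct Jg as [I [j [P [It ->]]]].
  destruct (GPath_extend s h I j t P It) as [e [J [K [He [PJ [HK HJ]]]]]].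
  apply pconv_eps; intros eps Heps.
  destruct (GPath_eventually_close s h K J t e tn PJ He Ht HK Htn Hlim eps Heps) as [N HN].
  exists N; intros n Hn; destruct (HN n Hn) as [Kn Hclose].
  assert (Hn' : peq (gn n) (J (tn n))).
  { apply (GPathVal_unique s (tn n) h); [now apply Jst_GPathVal | exists K, J; auto]. }
  now rewrite (dP_peq_l _ _ _ Hn'), (dP_peq_r _ _ _ (peq_sym _ _ (HJ t It))).
Qed.

End GammaPaths.

Theorem mainTheorem13 :
  forall (Gam : R -> M2 -> Prop) (s : R) (H : M2 -> Prop),
    DPath Gam -> unit01 s -> PSub H -> (forall h, H h -> Gam s h) ->
    (forall t, unit01 t -> PSub (JH Gam s t H) /\ (forall g, JH Gam s t H g -> Gam t g)) /\
    (FinGen H ->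
      ((forall t, unit01 t -> inD (JH Gam s t H)) /\
       (forall (tn : nat -> R) (t : R), unit01 t -> (forall n, unit01 (tn n)) ->
          is_lim_seq tn t -> chab_conv (fun n => JH Gam s (tn n) H) (JH Gam s t H))) /\
      (forall I : R -> Prop, sub_interval I ->
         (forall t, I t -> JInjHom Gam s t H) ->
         (forall t, I t -> inD (JH Gam s t H)) /\
         (forall (tn : nat -> R) (t : R), I t -> (forall n, I (tn n)) -> is_lim_seq tn t ->
            (forall h g (gn : nat -> M2), H h -> Jst Gam s t h = Some g ->
               (forall n, Jst Gam s (tn n) h = Some (gn n)) -> pconv gn g) /\
            chab_conv (fun n => JH Gam s (tn n) H) (JH Gam s t H)))).
Proof.
  intros Gam s H HD Hs HH _.
  assert (Hsub : forall t, unit01 t -> PSub (JH Gam s t H) /\ (forall g, JH Gam s t H g -> Gam t g))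
    by (intros t Ht; split; [apply JH_PSub | intro; apply JH_sub_Gam]; auto).
  assert (HinD : forall t, unit01 t -> inD (JH Gam s t H))
    by (intros t Ht; apply (inD_sub (Gam t)); [apply HD, Ht | apply Hsub, Ht | apply Hsub, Ht]).
  assert (Hchab : forall (tn : nat -> R) t, unit01 t -> (forall n, unit01 (tn n)) -> is_lim_seq tn t ->
                    chab_conv (fun n => JH Gam s (tn n) H) (JH Gam s t H)).
  { intros tn t Ht Htn Hlim; split;
      [exact (JH_limit_points Gam HD s H tn t Ht Htn Hlim)
      | exact (JH_approximation Gam HD s H tn t Hs HH Ht Htn Hlim)]. }
  split; [exact Hsub |]; intros _; split; [split; [exact HinD | exact Hchab] |].
  intros I [HI _] _; split; [intros t It; apply HinD, HI, It |].
  intros tn t It Itn Hlim; split; [| apply Hchab; auto].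
  intros h g gn _; apply (Jst_continuous Gam HD s tn t); auto.
Qed.
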